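(* Let $(X,d)$ be a compact metric space and let $f_{1,\infty}=\{f_n\}_{n=1}^\infty$ be a sequence of continuous maps $f_n:X\to X$ which is $k$-periodic for some $k\in\mathbb{N}$, i.e. $f_{j+kl}=f_j$ for all $l\in\mathbb{N}$ and all $1\le j\le k$. Then the non-autonomous system $(X,f_{1,\infty})$ is strongly multi-sensitive if and only if the autonomous system $(X, f_k\circ\cdots\circ f_1)$ is strongly multi-sensitive. Likewise, $(X,f_{1,\infty})$ is $\mathcal{N}$-sensitive if and only if $(X, f_k\circ\cdots\circ f_1)$ is $\mathcal{N}$-sensitive.
   Context: For a sequence $f_{1,\infty}=\{f_n\}$ of continuous self-maps of a compact metric space $(X,d)$, write $f_i^n=f_{n+i-1}\circ\cdots\circ f_i$ and $f_i^0=\mathrm{id}$; an autonomous system $(X,f)$ is the case $f_n=f$ for all $n$. For $k\in\mathbb{N}$ the $k$-th iterate is $f_{1,\infty}^{[k]}=\{f^k_{k(n-1)+1}\}_{n=1}^\infty$ (so its $n$-fold composition starting at index $1$ is $f_1^{kn}$). For $V\subseteq X$ and $\delta>0$, $N_{f_{1,\infty}}(V,\delta)=\{n\in\mathbb{N}: \exists u,v\in V,\ d(f_1^n(u),f_1^n(v))>\delta\}$. For $\mathbf{v}=(v_1,\dots,v_r)\in\mathbb{N}^r$, $(X,f_{1,\infty})$ is multi-sensitive with respect to $\mathbf{v}$ if there is $\delta>0$ such that for all nonempty open $U_1,\dots,U_r\subseteq X$, $\bigcap_{i=1}^r N_{f_{1,\infty}^{[v_i]}}(U_i,\delta)\neq\varnothing$.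 The system is $\mathcal{N}$-sensitive if it is multi-sensitive with respect to $(1,2,\dots,n)$ for every $n\in\mathbb{N}$, and strongly multi-sensitive if it is multi-sensitive with respect to every vector in $\mathbb{N}^r$, for every $r\in\mathbb{N}$. *)

From HB Require Import structures.
From mathcomp Require Import all_boot all_order all_algebra.
From mathcomp Require Import all_classical all_reals all_analysis.
Set Implicit Arguments. Unset Strict Implicit. Unset Printing Implicit Defensive.
Import Order.TTheory GRing.Theory Num.Theory.
Local Open Scope classical_set_scope.
Local Open Scope ring_scope.

(* Sequences f_{1,oo} = {f_n}_{n>=1} are represented by f : nat -> X -> X;
   the value f 0 is never used. *)

Fixpoint ncomp {X : Type} (f : nat -> X -> X) (i n : nat) : X -> X :=
  match n with
  | 0 => id
  | n'.+1 => f (i + n')%N \o ncomp f i n'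
  end.

Definition iter_seq {X : Type} (f : nat -> X -> X) (k : nat) : nat -> X -> X :=
  fun n => ncomp f (k * (n.-1) + 1)%N k.

Definition Nset {R : realType} {X : metricType R} (f : nat -> X -> X)
    (V : set X) (delta : R) : set nat :=
  [set n | (1 <= n)%N /\ exists u v, V u /\ V v /\
           delta < mdist (ncomp f 1 n u) (ncomp f 1 n v)].

Definition multi_sensitive {R : realType} {X : metricType R}
    (f : nat -> X -> X) (r : nat) (v : 'I_r -> nat) : Prop :=
  exists delta : R, 0 < delta /\
    forall U : 'I_r -> set X,
      (forall i, open (U i) /\ U i !=set0) ->
      exists n : nat, forall i, Nset (iter_seq f (v i)) (U i) delta n.

Definition N_sensitive {R : realType} {X : metricType R}
    (f : nat -> X -> X) : Prop :=
  forall n : nat, (1 <= n)%N ->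
    multi_sensitive f (fun i : 'I_n => (nat_of_ord i).+1).

Definition strongly_multi_sensitive {R : realType} {X : metricType R}
    (f : nat -> X -> X) : Prop :=
  forall (r : nat) (v : 'I_r -> nat), (1 <= r)%N ->
    (forall i, (1 <= v i)%N) -> multi_sensitive f v.

Definition autonomous {X : Type} (g : X -> X) : nat -> X -> X := fun _ => g.

From HB Require Import structures.
From mathcomp Require Import all_boot all_order all_algebra.
From mathcomp Require Import all_classical all_reals all_analysis.
Set Implicit Arguments. Unset Strict Implicit. Unset Printing Implicit Defensive.
Import Order.TTheory GRing.Theory Num.Theory.
Local Open Scope classical_set_scope.

(* The n-fold composition of the v-th iterate of f is f_1^{vn}, and
   k-periodicity gives f_1^{km} = g^m for g = f_k o ... o f_1.  Hence g is
   multi-sensitive w.r.t. v iff f is multi-sensitive w.r.t. kv, and the latter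
   implies multi-sensitivity w.r.t. v by observing f at time kn instead of n.
   For N-sensitivity, (k, 2k, ..., nk) is a subvector of (1, 2, ..., nk). *)

Lemma ncompD {X : Type} (h : nat -> X -> X) i a b x :
  ncomp h i (a + b) x = ncomp h (i + a) b (ncomp h i a x).
Proof.
elim: b => [|b IH]; first by rewrite addn0.
by rewrite addnS /= IH addnA.
Qed.

Lemma ncomp_iter_seq {X : Type} (h : nat -> X -> X) v n x :
  ncomp (iter_seq h v) 1 n x = ncomp h 1 (v * n) x.
Proof.
elim: n => [|n IH]; first by rewrite muln0.
by rewrite /= IH mulnS (addnC v) ncompD /iter_seq addn1 add1n.
Qed.

Lemma ncomp_autonomous {X : Type} (g : X -> X) i n x :
  ncomp (autonomous g) i n x = iter n g x.
Proof. by elim: n => [|n IH] //=; rewrite IH. Qed.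

Section Periodic.
Variables (X : Type) (f : nat -> X -> X) (k : nat).
Hypothesis hper :
  forall l j, (1 <= l)%N -> (1 <= j <= k)%N -> f (j + k * l)%N = f j.

Lemma ncomp_shift_period m j x : (j <= k)%N ->
  ncomp f (1 + k * m) j x = ncomp f 1 j x.
Proof.
case: m => [|m]; first by rewrite muln0 addn0.
elim: j => [|j IH] ltjk //=.
by rewrite IH ?(ltnW ltjk) // addnAC hper // add1n.
Qed.

Lemma ncomp_period_mul m x : ncomp f 1 (k * m) x = iter m (ncomp f 1 k) x.
Proof.
elim: m => [|m IH]; first by rewrite muln0.
by rewrite mulnS addnC ncompD ncomp_shift_period //= IH.
Qed.

End Periodic.

Section MultiSensitivity.
Variables (R : realType) (X : metricType R).

Lemma multi_sensitive_reparam (h1 h2 : nat -> X -> X) r (v1 v2 : 'I_r -> nat)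
    (phi : nat -> nat) :
  (forall n, (0 < n)%N -> (0 < phi n)%N) ->
  (forall i n x, ncomp h1 1 (v1 i * n) x = ncomp h2 1 (v2 i * phi n) x) ->
  multi_sensitive h1 v1 -> multi_sensitive h2 v2.
Proof.
move=> phi_gt0 orbitE [d [d_gt0 sens1]]; exists d; split => // U HU.
have [n Hn] := sens1 U HU; exists (phi n) => i.
have [n_gt0 [u [w [Uu [Uw duw]]]]] := Hn i.
split; first exact: phi_gt0.
by exists u, w; rewrite !ncomp_iter_seq -!orbitE -!ncomp_iter_seq.
Qed.

Lemma multi_sensitive_scale (h : nat -> X -> X) r (v : 'I_r -> nat) k :
  (0 < k)%N -> multi_sensitive h (fun i => k * v i)%N -> multi_sensitive h v.
Proof.
move=> k_gt0; apply: (multi_sensitive_reparam (phi := muln k)).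
  by move=> n n_gt0; rewrite muln_gt0 k_gt0.
by move=> i n x /=; rewrite mulnCA mulnA.
Qed.

Lemma multi_sensitive_retract (h : nat -> X -> X) r s
    (v : 'I_r -> nat) (w : 'I_s -> nat) (t : 'I_r -> 'I_s) (e : 'I_s -> 'I_r) :
  cancel e t -> (forall i, v (e i) = w i) ->
  multi_sensitive h v -> multi_sensitive h w.
Proof.
move=> eK vwE [d [d_gt0 sens]]; exists d; split => // U HU.
have [n Hn] := sens (U \o t) (fun j => HU (t j)); exists n => i.
by have := Hn (e i); rewrite /= eK vwE.
Qed.

Variables (f : nat -> X -> X) (k : nat).
Hypothesis hper :
  forall l j, (1 <= l)%N -> (1 <= j <= k)%N -> f (j + k * l)%N = f j.

Lemma multi_sensitive_autonomous_period r (v : 'I_r -> nat) :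
  multi_sensitive (autonomous (ncomp f 1 k)) v <->
  multi_sensitive f (fun i => k * v i)%N.
Proof.
have orbitE i n x :
    ncomp (autonomous (ncomp f 1 k)) 1 (v i * n) x = ncomp f 1 (k * v i * n) x.
  by rewrite ncomp_autonomous -ncomp_period_mul // mulnA.
by split; apply: (multi_sensitive_reparam (phi := id)) => // i n x;
  rewrite orbitE.
Qed.

Hypothesis k_gt0 : (0 < k)%N.

Lemma strongly_multi_sensitive_autonomous_period :
  strongly_multi_sensitive f <->
  strongly_multi_sensitive (autonomous (ncomp f 1 k)).
Proof.
split=> sens r v r_gt0 v_gt0.
- apply/multi_sensitive_autonomous_period; apply: sens => // i.
  by rewrite muln_gt0 k_gt0 v_gt0.
- apply: (multi_sensitive_scale k_gt0).
  by apply/multi_sensitive_autonomous_period; exact: sens.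
Qed.

Lemma N_sensitive_autonomous_period :
  N_sensitive f <-> N_sensitive (autonomous (ncomp f 1 k)).
Proof.
split=> sens n n_gt0; last first.
  apply: (multi_sensitive_scale k_gt0).
  by apply/multi_sensitive_autonomous_period; exact: sens.
apply/multi_sensitive_autonomous_period.
case: n n_gt0 => [//|n] _.
have nk_gt0 : (0 < n.+1 * k)%N by rewrite muln_gt0 k_gt0.
(* The entry j+1 of (1, ..., (n+1)k) lies in the block of
   i = (j+1)/k - 1, whose last entry is (i+1)k. *)
have e_lt (i : 'I_n.+1) : ((i.+1 * k).-1 < n.+1 * k)%N.
  by rewrite prednK ?muln_gt0 ?k_gt0 // leq_mul2r ltn_ord orbT.
pose e (i : 'I_n.+1) : 'I_(n.+1 * k) := Ordinal (e_lt i).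
have eK : cancel e (fun j : 'I_(n.+1 * k) => inord (j.+1 %/ k).-1).
  by move=> i; rewrite /= prednK ?muln_gt0 ?k_gt0 // mulnK // inord_val.
apply: (multi_sensitive_retract eK _ (sens _ nk_gt0)) => i /=.
by rewrite prednK ?muln_gt0 ?k_gt0 // mulnC.
Qed.

End MultiSensitivity.

Theorem mainTheorem1 (R : realType) (X : metricType R)
  (hX : compact [set: X]) (f : nat -> X -> X)
  (hcont : forall n, (1 <= n)%N -> continuous (f n))
  (k : nat) (hk : (1 <= k)%N)
  (hper : forall l j, (1 <= l)%N -> (1 <= j <= k)%N -> f (j + k * l)%N = f j) :
  (strongly_multi_sensitive f <->
     strongly_multi_sensitive (autonomous (ncomp f 1%N k))) /\
  (N_sensitive f <-> N_sensitive (autonomous (ncomp f 1%N k))).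
Proof.
split.
- exact: strongly_multi_sensitive_autonomous_period.
- exact: N_sensitive_autonomous_period.
Qed.
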